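(* For $n\ge2$, $$\mathbf{cf}_{n,2}(p,q)|_{p^0}=q^{\binom{n-1}{2}}[n-1]_q.$$ Moreover, $\mathbf{cf}_{4,2}(p,q)|_{p^1}=q^2+q^3$, and for $n\ge5$, $$\mathbf{cf}_{n,2}(p,q)|_{p^1}=\binom{n-2}{2}q^{\binom{n}{2}-3}+q^{\binom{n-1}{2}-2}\sum_{i=0}^{n-3}\left(\binom{n-3}{2}+i\right)q^i.$$
   Context: $F_1(p,q)=q$, $F_2(p,q)=q^2$ and $F_m(p,q)=qF_{m-1}(p,q)+pF_{m-2}(p,q)$ for $m\ge3$. Let $(x)_{\uparrow_{F,p,q,0}}=1$ and $(x)_{\uparrow_{F,p,q,k}}=x(x+F_1(p,q))\cdots(x+F_{k-1}(p,q))$ for $k\ge1$. Define the polynomials $\mathbf{cf}_{n,k}(p,q)$ for $0\le k\le n$ by $(x)_{\uparrow_{F,p,q,n}}=\sum_{k=0}^n\mathbf{cf}_{n,k}(p,q)x^k$. For a polynomial $f$ in $p$ with coefficients in $\mathbb{Q}[q]$, $f|_{p^s}$ denotes the coefficient of $p^s$. $[m]_q=1+q+\cdots+q^{m-1}$. *)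

From mathcomp Require Import all_boot all_order all_algebra.
Set Implicit Arguments. Unset Strict Implicit. Unset Printing Implicit Defensive.
Import GRing.Theory.
Local Open Scope ring_scope.

(* Polynomials in p with coefficients in Q[q]: type {poly {poly rat}}.
   The outer variable is p, the inner variable 'X : {poly rat} is q. *)
Definition PQ := {poly {poly rat}}.

Definition qv : PQ := ('X : {poly rat})%:P.
Definition pv : PQ := 'X.

(* F_m(p,q); F_0 := 0 is only a filler value, never used below. *)
Fixpoint Fpq (m : nat) : PQ :=
  match m with
  | 0 => 0
  | S m1 => match m1 with
            | 0 => qv
            | 1 => qv ^+ 2
            | S m2 => qv * Fpq m1 + pv * Fpq m2
            end
  end.

Definition rising (k : nat) : {poly PQ} :=
  match k with
  | 0 => 1
  | S k' => 'X * \prod_(1 <= i < k) ('X + (Fpq i)%:P)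
  end.

Definition cf (n k : nat) : PQ := (rising n)`_k.

Definition coefp_ (f : PQ) (s : nat) : {poly rat} := f`_s.

Definition qint (m : nat) : {poly rat} := \sum_(i < m) 'X^i.

From mathcomp Require Import all_boot all_order all_algebra ring zify.
Import GRing.Theory.
Local Open Scope ring_scope.

(* Write (x)_{F,n+1} = x * P_n(x) with P_n(x) = prod_(i=1..n) (x + F_i), so
   cf_{n+1,2} is the coefficient of x in P_n.  Multiplying P_n by x + F_(n+1)
   gives recurrences for the coefficients of x^0 and x of P_n, and it suffices
   to track them modulo p^2.  Modulo p^2 one has F_j = q^j + (j-2) q^(j-3) p,
   and the recurrences are then solved in closed form by induction on n. *)

Section LowCoefficients.
Variable R : nzSemiRingType.

Lemma coef1M (a b : {poly R}) : (a * b)`_1 = a`_0 * b`_1 + a`_1 * b`_0.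
Proof. by rewrite coefM big_ord_recr big_ord1. Qed.

Lemma coef0_mulXaddC (P : {poly R}) c : (P * ('X + c%:P))`_0 = P`_0 * c.
Proof. by rewrite mulrDr coefD coefMX coefMC add0r. Qed.

Lemma coef1_mulXaddC (P : {poly R}) c :
  (P * ('X + c%:P))`_1 = P`_0 + P`_1 * c.
Proof. by rewrite mulrDr coefD coefMX coefMC. Qed.

End LowCoefficients.

Lemma binS2 n : 'C(n.+1, 2) = ('C(n, 2) + n)%N.
Proof. by rewrite binS bin1. Qed.

Lemma Fpq_rec j : Fpq j.+3 = qv * Fpq j.+2 + pv * Fpq j.+1.
Proof. by []. Qed.

Lemma coef_Fpq_rec j s :
  (Fpq j.+3)`_s = 'X * (Fpq j.+2)`_s + (if s == 0%N then 0 else (Fpq j.+1)`_s.-1).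
Proof. by rewrite Fpq_rec coefD /qv /pv coefCM coefXM. Qed.

Lemma Fpq_coef0 j : (Fpq j.+1)`_0 = 'X^(j.+1).
Proof.
suff /(_ j)[] : forall k, (Fpq k.+1)`_0 = 'X^(k.+1) /\ (Fpq k.+2)`_0 = 'X^(k.+2) by [].
elim=> {j} [|j [_ IH]].
  by rewrite /= /qv -rmorphXn !coefC expr1.
by split=> //; rewrite coef_Fpq_rec IH addr0 -exprS.
Qed.

Lemma Fpq1_coef1 : (Fpq 1)`_1 = 0.
Proof. by rewrite /= /qv coefC. Qed.

Lemma Fpq_coef1 j : (Fpq j.+2)`_1 = j%:R * 'X^j.
Proof.
elim: j => [|j IH]; first by rewrite /= /qv -rmorphXn coefC mul0r.
by rewrite coef_Fpq_rec IH Fpq_coef0 exprS mulrCA -natr1 mulrDl mul1r.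
Qed.

Definition Fprod (m : nat) : {poly PQ} := \prod_(1 <= i < m.+1) ('X + (Fpq i)%:P).

Definition Fprod_coef (m i s : nat) : {poly rat} := ((Fprod m)`_i)`_s.

Lemma cf_Fprod_coef m s : coefp_ (cf m.+1 2) s = Fprod_coef m 1 s.
Proof. by rewrite /coefp_ /cf /rising coefXM. Qed.

Lemma Fprod0_coef i s : Fprod_coef 0 i s = ((i == 0%N) && (s == 0%N))%:R.
Proof.
by rewrite /Fprod_coef /Fprod big_geq // coef1; case: i => [|i]; rewrite ?coef1 ?coef0.
Qed.

Lemma FprodS m : Fprod m.+1 = Fprod m * ('X + (Fpq m.+1)%:P).
Proof. by rewrite /Fprod big_nat_recr. Qed.

Lemma Fprod_coef00S m : Fprod_coef m.+1 0 0 = Fprod_coef m 0 0 * (Fpq m.+1)`_0.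
Proof. by rewrite /Fprod_coef FprodS coef0_mulXaddC coef0M. Qed.

Lemma Fprod_coef01S m :
  Fprod_coef m.+1 0 1 =
  Fprod_coef m 0 0 * (Fpq m.+1)`_1 + Fprod_coef m 0 1 * (Fpq m.+1)`_0.
Proof. by rewrite /Fprod_coef FprodS coef0_mulXaddC coef1M. Qed.

Lemma Fprod_coef10S m :
  Fprod_coef m.+1 1 0 = Fprod_coef m 0 0 + Fprod_coef m 1 0 * (Fpq m.+1)`_0.
Proof. by rewrite /Fprod_coef FprodS coef1_mulXaddC coefD coef0M. Qed.

Lemma Fprod_coef11S m :
  Fprod_coef m.+1 1 1 = Fprod_coef m 0 1
    + (Fprod_coef m 1 0 * (Fpq m.+1)`_1 + Fprod_coef m 1 1 * (Fpq m.+1)`_0).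
Proof. by rewrite /Fprod_coef FprodS coef1_mulXaddC coefD coef1M. Qed.

Lemma Fprod_coef00 m : Fprod_coef m 0 0 = 'X^('C(m.+1, 2)).
Proof.
elim: m => [|m IH]; first by rewrite Fprod0_coef.
by rewrite Fprod_coef00S IH Fpq_coef0 -exprD [in RHS]binS2 addnS.
Qed.

Lemma Fprod1_coef01 : Fprod_coef 1 0 1 = 0.
Proof. by rewrite Fprod_coef01S Fpq1_coef1 !Fprod0_coef mulr0 mul0r addr0. Qed.

(* This and Fprod_coef11 are stated multiplied by a power of q, so that no
   truncated subtraction of exponents occurs. *)
Lemma Fprod_coef01 j : 'X^2 * Fprod_coef j.+1 0 1 = 'C(j, 2)%:R * 'X^('C(j.+2, 2)).
Proof.
elim: j => [|j IH]; first by rewrite Fprod1_coef01 mulr0 mul0r.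
have -> : 'X^2 * Fprod_coef j.+2 0 1 = 'X^2 * Fprod_coef j.+1 0 0 * (Fpq j.+2)`_1
    + 'X^2 * Fprod_coef j.+1 0 1 * (Fpq j.+2)`_0 by rewrite Fprod_coef01S; ring.
rewrite IH Fprod_coef00 Fpq_coef1 Fpq_coef0 (binS2 j.+2) (binS2 j.+1) (binS2 j).
rewrite !natrD !exprD !exprS; ring.
Qed.

Lemma qintSr m : qint m.+1 = qint m + 'X^m.
Proof. by rewrite /qint big_ord_recr. Qed.

Lemma qintSl m : qint m.+1 = 1 + 'X * qint m.
Proof.
rewrite /qint big_ord_recl expr0 mulr_sumr; congr (_ + _).
by apply: eq_bigr => i _; rewrite exprS.
Qed.

Lemma Fprod_coef10 m : Fprod_coef m 1 0 = 'X^('C(m, 2)) * qint m.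
Proof.
elim: m => [|m IH]; first by rewrite Fprod0_coef /qint big_ord0 mulr0.
rewrite Fprod_coef10S IH Fprod_coef00 qintSl Fpq_coef0 (binS2 m).
rewrite !exprD !exprS; ring.
Qed.

Definition qsum_binom (k : nat) : {poly rat} :=
  \sum_(0 <= i < k.+1) ('C(k, 2) + i)%:R *: 'X^i.

Lemma qsum_binomS k :
  qsum_binom k.+1 = 'C(k.+1, 2)%:R + 'X * qsum_binom k + k.+1%:R * 'X * qint k.+1.
Proof.
rewrite /qsum_binom (big_nat_recl _ _ _ (leq0n _)) addn0 expr0 scaler_nat -addrA.
congr (_ + _).
rewrite /qint -(big_mkord xpredT (fun i => 'X^i)) !mulr_sumr -big_split.
apply: eq_bigr => i _ /=.
by rewrite !scaler_nat addnS binS2 exprS; ring.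
Qed.

Lemma Fprod_coef11 k :
  'X^3 * Fprod_coef k.+2 1 1 =
  'C(k.+1, 2)%:R * 'X^('C(k.+3, 2)) + 'X^('C(k.+2, 2) + 1) * qsum_binom k.
Proof.
elim: k => [|k IH].
  rewrite Fprod_coef11S Fprod1_coef01 Fprod_coef11S Fpq_coef1 Fpq1_coef1.
  rewrite !Fprod0_coef /qsum_binom big_nat1 /=.
  by rewrite !(mul0r, mulr0, addr0, add0r, scale0r).
have -> : 'X^3 * Fprod_coef k.+3 1 1 = 'X * ('X^2 * Fprod_coef k.+2 0 1)
    + 'X^3 * Fprod_coef k.+2 1 0 * (Fpq k.+3)`_1
    + 'X^3 * Fprod_coef k.+2 1 1 * (Fpq k.+3)`_0 by rewrite Fprod_coef11S; ring.
rewrite Fprod_coef01 IH Fprod_coef10 Fpq_coef1 Fpq_coef0 qsum_binomS (qintSr k.+1).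
rewrite (binS2 k.+3) (binS2 k.+2) (binS2 k.+1).
set c := 'C(k.+1, 2); clearbody c.
rewrite !natrD !exprD !exprS; ring.
Qed.

Lemma Fprod_coef11E k : (1 <= k)%N ->
  Fprod_coef k.+2 1 1 =
  'C(k.+1, 2)%:R *: 'X^('C(k.+3, 2) - 3) + 'X^('C(k.+2, 2) - 2) * qsum_binom k.
Proof.
move=> k_gt0; have X3_neq0 : ('X^3 : {poly rat}) != 0 by rewrite expf_neq0 ?polyX_eq0.
apply: (mulfI X3_neq0); rewrite Fprod_coef11 mulr_natl mulrDr -scalerAr scaler_nat.
have e3 : (3 + ('C(k.+3, 2) - 3))%N = 'C(k.+3, 2) by rewrite !binS2; lia.
have e2 : (3 + ('C(k.+2, 2) - 2))%N = ('C(k.+2, 2) + 1)%N by rewrite !binS2; lia.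
by rewrite -exprD e3 mulrA -exprD e2.
Qed.

Theorem theorem15 :
  (forall n : nat, (2 <= n)%N ->
     coefp_ (cf n 2) 0 = 'X^('C(n.-1, 2)) * qint n.-1)
  /\ coefp_ (cf 4 2) 1 = 'X^2 + 'X^3
  /\ (forall n : nat, (5 <= n)%N ->
     coefp_ (cf n 2) 1 =
       ('C(n - 2, 2))%:R *: 'X^('C(n, 2) - 3)
       + 'X^('C(n.-1, 2) - 2) *
         \sum_(0 <= i < n - 2) (('C(n - 3, 2) + i)%:R *: 'X^i)).
Proof.
split; first by case=> [//|m] _; rewrite cf_Fprod_coef Fprod_coef10.
split.
  rewrite cf_Fprod_coef (@Fprod_coef11E 1) // /qsum_binom.
  rewrite big_ltn // big_nat1 (_ : 'C(2, 2) = 1%N) // (_ : 'C(1, 2) = 0%N) //.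
  rewrite (_ : ('C(4, 2) - 3 = 3)%N) // (_ : ('C(3, 2) - 2 = 1)%N) //.
  by rewrite !add0n scale0r add0r !scale1r -expr2 addrC.
case=> [|[|[|[|[|k]]]]] // _.
by rewrite cf_Fprod_coef Fprod_coef11E.
Qed.
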